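(* Let $m,n$ be positive integers with $m>n$ and $m\ge 3$, and let $q$ be an odd prime. Let $X,y_1,y_2$ be positive integers with $X>1$, $\gcd(X,q)=1$, $y_1>y_2$ and $X^m-X^n=q^{y_1}-q^{y_2}$. Put $E=e_q(X)$, $N=(m-n)/E$ (an integer) and $e=\nu_q(N)$, and assume $N$ is odd. With \[ A_E(t)=\begin{cases} t-1 & E=1,\\ t^{E-1}+\cdots+t+1 & E>1,\end{cases}\quad B_{n,E}(t)=\begin{cases} t^n & E=1,\\ t^n(t-1) & E>1,\end{cases}\quad I_{E,N}(t)=\sum_{j=0}^{N-1}t^{Ej}, \] one has $y_2>e$, $I_{E,N}(X)\equiv 0\pmod{q^e}$, and there is a positive integer $K$ with $\gcd(K,q)=1$ such that \[ A_E(X)=K\,q^{y_2-e},\qquad B_{n,E}(X)\,I_{E,N}(X)\,K=q^e(q^{y_1-y_2}-1). \] Moreover: (i) if $E=1$, then $y_1>2(y_2-e)$, and $y_1>m(y_2-e)$ if $K>1$; (ii) if $E>1$, then $y_1\ge \frac{m}{E-1}(y_2-e)$ if $K>1$, and $y_1\ge 2(y_2-e)$ if $\dfrac{(y_2-e)(m-2E+2)+E-1}{m+\delta(E-1)}\ge\dfrac{\log 2}{\log q}$, where $\delta=1$ if $X^m>q^{y_1}$ and $\delta=0$ if $X^m<q^{y_1}$.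
   Context: For a positive integer $M$ and an integer $A$ coprime to $M$, $e_M(A)$ denotes the least positive integer $e$ such that $A^e\equiv \pm1\pmod M$. For a prime $p$, $\nu_p$ denotes the $p$-adic valuation. *)

From Stdlib Require Export Reals.
From mathcomp Require Export all_boot.
(* after mathcomp, the key %R no longer denotes Stdlib's R_scope *)
Delimit Scope R_scope with Re.

(* e_M(A): least positive e with A^e = +-1 (mod M).  For A coprime to M
   (M >= 1) such an e exists and is <= M (it divides the order of A mod M,
   which is <= totient M <= M), so searching e in 1..M is exhaustive. *)
Definition pm1_mod (M a : nat) : bool :=
  (a == 1 %[mod M]) || (M %| a + 1).

Definition e_ord (M A : nat) : nat :=
  (find (fun e => pm1_mod M (A ^ e)) (iota 1 M)).+1.

Definition A_poly (E t : nat) : nat :=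
  if E == 1 then t - 1 else \sum_(i < E) t ^ i.

Definition B_poly (n E t : nat) : nat :=
  if E == 1 then t ^ n else t ^ n * (t - 1).

Definition I_poly (E N t : nat) : nat := \sum_(j < N) t ^ (E * j).

(* The equation factors as X^n (X^(m-n) - 1) = q^y2 (q^(y1-y2) - 1) with X^n and
   q^(y1-y2) - 1 prime to q, so nu_q(X^(m-n) - 1) = y2.  Since N = (m-n)/E is odd, X^E is
   1 and not -1 modulo q; hence X^(m-n) - 1 = (X^E - 1) I_{E,N}(X), and lifting the exponent
   gives nu_q(I_{E,N}(X)) = nu_q(N) = e.  The remaining q^(y2-e) sits in A_E(X), because
   q does not divide X - 1 when E > 1.  The inequalities compare sizes:
   X^(m-E) (X^E - 1) <= X^m - X^n < q^y1, while A_E(X) = K q^(y2-e) is at most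
   2 X^(E-1) and its m-th power is at most 2^m (X^(m-E) (X^E - 1))^(E-1). *)

From Stdlib Require Import Lra.
From mathcomp Require Import all_algebra cyclic zify.
Import GRing.Theory.
Set Implicit Arguments.
Unset Strict Implicit.

Definition geom (Z n : nat) : nat := \sum_(i < n) Z ^ i.

Lemma geomS Z n : geom Z n.+1 = geom Z n + Z ^ n.
Proof. by rewrite /geom big_ord_recr. Qed.

Lemma geom_gt0 Z n : 0 < n -> 0 < geom Z n.
Proof. by case: n => // n _; rewrite /geom big_ord_recl expn0. Qed.

Lemma subnX1 Z n : Z ^ n - 1 = (Z - 1) * geom Z n.
Proof.
rewrite -[1 in LHS](exp1n n) subn_exp /geom; congr (_ * _).
rewrite (reindex_inj rev_ord_inj) /=; apply: eq_bigr => i _.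
by rewrite exp1n muln1; congr (Z ^ _); have := ltn_ord i; lia.
Qed.

Lemma geomM Y M k : 1 < Y -> geom Y (k * M) = geom Y M * geom (Y ^ M) k.
Proof.
move=> Y_gt1; apply/eqP; rewrite -(eqn_pmul2l (_ : 0 < Y - 1)) ?subn_gt0 //.
by rewrite -subnX1 mulnA -subnX1 -subnX1 -expnM mulnC.
Qed.

Lemma geomS_lt X E : 1 < X -> geom X E.+1 < 2 * X ^ E.
Proof.
move=> X_gt1; elim: E => [|E IH]; first by rewrite /geom big_ord_recl big_ord0.
rewrite geomS !expnS.
have : 2 * X ^ E <= X * X ^ E by rewrite leq_mul2r X_gt1 orbT.
lia.
Qed.

Lemma expn_1q t q j : exists c, (1 + t * q) ^ j = 1 + j * t * q + q ^ 2 * c.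
Proof.
elim: j => [|j [c IH]]; first by exists 0; rewrite expn0; lia.
by exists (j * t * t + c + c * t * q); rewrite expnS IH; nia.
Qed.

Lemma geom_1q t q n : exists c, geom (1 + t * q) n = n + t * q * 'C(n, 2) + q ^ 2 * c.
Proof.
elim: n => [|n [c IH]]; first by exists 0; rewrite /geom big_ord0 bin0n; lia.
have [c' Hc'] := expn_1q t q n.
by exists (c + c'); rewrite geomS IH Hc' binS bin1; nia.
Qed.

Section LiftingTheExponent.

Variable q : nat.
Hypotheses (q_prime : prime q) (q_odd : odd q).

(* Since [q] is odd, [q] divides ['C(q, 2)], so [geom (1 + t q) q = q] modulo [q ^ 2]. *)
Lemma logn_geom_prime t : logn q (geom (1 + t * q) q) = 1.
Proof.
have [c Hc] := geom_1q t q q.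
have -> : geom (1 + t * q) q = q * (1 + q * (t * q.-1./2 + c)).
  by rewrite Hc bin2odd //; nia.
rewrite (lognM _ (prime_gt0 q_prime)) // logn_prime // eqxx logn_coprime ?addn0 //.
by rewrite /coprime addnC mulnC gcdnMDl gcdn1.
Qed.

Lemma logn_geom N Y : 0 < N -> 1 < Y -> q %| Y - 1 -> logn q (geom Y N) = logn q N.
Proof.
elim/ltn_ind: N Y => N IH Y N_gt0 Y_gt1 qY.
have q_gt0 := prime_gt0 q_prime.
have [t Yt] : exists t, Y = 1 + t * q by exists ((Y - 1) %/ q); rewrite divnK //; lia.
have [qN | qNN] := boolP (q %| N).
  have NqM : N = q * (N %/ q) by rewrite mulnC divnK.
  have M_gt0 : 0 < N %/ q by rewrite divn_gt0 // dvdn_leq.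
  have YM_gt1 : 1 < Y ^ (N %/ q) by rewrite -(exp1n (N %/ q)) ltn_exp2r.
  have [u YMu] : exists u, Y ^ (N %/ q) = 1 + u * q.
    have qYM : q %| Y ^ (N %/ q) - 1 by rewrite subnX1 dvdn_mulr.
    by exists ((Y ^ (N %/ q) - 1) %/ q); rewrite divnK //; lia.
  rewrite {1}NqM geomM // lognM ?geom_gt0 // IH ?ltn_Pdiv ?(prime_gt1 q_prime) //.
  by rewrite YMu logn_geom_prime {2}NqM lognM // (logn_prime _ q_prime) eqxx addnC.
have [c Hc] := geom_1q t q N.
rewrite -Yt in Hc; rewrite (logn_coprime (m := N)) ?prime_coprime //.
apply: logn_coprime; rewrite prime_coprime // Hc -addnA dvdn_addl //.
by rewrite dvdn_add // dvdn_mulr // ?dvdn_mull // dvdn_exp.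
Qed.

End LiftingTheExponent.

Lemma totient_leq n : totient n <= n.
Proof.
have : \sum_(0 <= d < n) coprime n d <= \sum_(0 <= d < n) 1.
  by apply: leq_sum => d _; apply: leq_b1.
by rewrite -totient_count_coprime sum_nat_const_nat muln1 subn0.
Qed.

Lemma e_ordP M A : 0 < M -> coprime A M ->
  [/\ 0 < e_ord M A, pm1_mod M (A ^ e_ord M A)
    & forall k, 0 < k < e_ord M A -> ~~ pm1_mod M (A ^ k)].
Proof.
move=> M_gt0 coAM; set pm1A := fun e => pm1_mod M (A ^ e).
have has_pm1 : has pm1A (iota 1 M).
  apply/hasP; exists (totient M).
    by rewrite mem_iota add1n ltnS totient_leq totient_gt0 M_gt0.
  by rewrite /pm1A /pm1_mod Euler_exp_totient // eqxx.
have lt_find : find pm1A (iota 1 M) < M by rewrite -[M in _ < M](size_iota 1) -has_find.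
rewrite /e_ord -/pm1A; split => //.
  by have := nth_find 0 has_pm1; rewrite nth_iota // add1n.
move=> k /andP [k_gt0 lt_k]; have := @before_find _ 0 pm1A (iota 1 M) k.-1.
rewrite nth_iota ?add1n ?prednK //; last lia.
by move=> H; apply/negbT; apply: H.
Qed.

Section PlusMinusOne.

Variable R : nzRingType.

Definition pm1 (x : R) : bool := ((x == 1) || (x == -1))%R.

(* With [s := x ^+ E = +-1] and [r = N * E + t], [x ^+ r = 1] gives [s * x ^+ t = 1]
   as [N] is odd, hence [x ^+ t = s]: minimality of [E] forces [t = 0], and then [s = 1]. *)
Lemma pm1_expr_dvd (x : R) E r : 0 < E -> pm1 (x ^+ E)%R ->
  (forall k, 0 < k < E -> ~~ pm1 (x ^+ k)%R) -> (x ^+ r = 1)%R -> odd (r %/ E) ->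
  E %| r /\ (x ^+ E = 1)%R.
Proof.
move=> E_gt0 pm1E minE xr1 odd_N; set s := (x ^+ E)%R in pm1E *.
have s_odd : (s ^+ (r %/ E))%R = s.
  by case/orP: pm1E => /eqP ->; rewrite ?expr1n // -signr_odd odd_N expr1.
have s_xt : (s * x ^+ (r %% E) = 1)%R.
  by rewrite -{1}s_odd /s -exprM mulnC -exprD -divn_eq.
have ss : (s * s = 1)%R by case/orP: pm1E => /eqP ->; rewrite ?mulr1 ?mulrNN ?mulr1.
have xt : (x ^+ (r %% E))%R = s by rewrite -[LHS]mul1r -ss -mulrA s_xt mulr1.
have t0 : r %% E = 0.
  apply/eqP; apply: contraTT pm1E; rewrite -lt0n -xt => t_gt0.
  by apply: minE; rewrite t_gt0 ltn_pmod.
by split; [apply/eqP | rewrite -s_xt t0 mulr1].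
Qed.

End PlusMinusOne.

Lemma pm1_mod_Fp q a : prime q -> 0 < a -> pm1_mod q a = pm1 (a%:R : 'F_q).
Proof.
move=> q_prime a_gt0; have charFq := pchar_Fp q_prime.
rewrite /pm1_mod eqn_mod_dvd // !(dvdn_pcharf charFq) natrB // subr_eq0.
by rewrite natrD addr_eq0.
Qed.

Lemma dvd_subX1_Fp q a : prime q -> 0 < a -> (q %| a - 1) = (a%:R == 1 :> 'F_q)%R.
Proof.
by move=> q_prime a_gt0; rewrite (dvdn_pcharf (pchar_Fp q_prime)) natrB // subr_eq0.
Qed.

Lemma e_ord_dvd q X r : prime q -> coprime X q -> q %| X ^ r - 1 ->
  odd (r %/ e_ord q X) -> e_ord q X %| r /\ q %| X ^ e_ord q X - 1.
Proof.
move=> q_prime coXq qXr odd_N.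
have X_gt0 : 0 < X.
  rewrite lt0n; apply: contraTneq coXq => ->.
  by rewrite /coprime gcd0n neq_ltn prime_gt1 ?orbT.
have [E_gt0 pm1E minE] := e_ordP (prime_gt0 q_prime) coXq.
have XkE k : ((X ^ k)%:R = (X%:R : 'F_q) ^+ k)%R by rewrite natrX.
rewrite pm1_mod_Fp ?expn_gt0 ?X_gt0 // XkE in pm1E.
have [||dvdE /eqP XE1] := pm1_expr_dvd E_gt0 pm1E _ _ odd_N.
- by move=> k /minE; rewrite pm1_mod_Fp ?expn_gt0 ?X_gt0 // XkE.
- by apply/eqP; rewrite -XkE -dvd_subX1_Fp // expn_gt0 X_gt0.
by rewrite dvd_subX1_Fp ?expn_gt0 ?X_gt0 // XkE.
Qed.

Lemma I_poly_geom E N X : I_poly E N X = geom (X ^ E) N.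
Proof. by apply: eq_bigr => j _; rewrite expnM. Qed.

Lemma A_poly_geom E X : E != 1 -> A_poly E X = geom X E.
Proof. by rewrite /A_poly => /negbTE ->. Qed.

Lemma B_A_poly n E X : B_poly n E X * A_poly E X = X ^ n * (X ^ E - 1).
Proof.
rewrite /B_poly /A_poly; case: eqP => [-> | _]; first by rewrite expn1.
by rewrite -mulnA -/(geom X E) -subnX1.
Qed.

Lemma coprime_subX1 q k : 0 < q -> 0 < k -> coprime q (q ^ k - 1).
Proof.
move=> q_gt0 k_gt0; rewrite -(coprime_pexpl _ _ k_gt0).
have -> : q ^ k = (q ^ k - 1).+1 by have := expn_gt0 q k; rewrite q_gt0; lia.
by rewrite subSS subn0 coprimeSn.
Qed.

Lemma leq_expn2r a b k : a <= b -> a ^ k <= b ^ k.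
Proof. by case: k => // k; rewrite leq_exp2r. Qed.

Lemma lt_mul_of_sub1_ge q X m d y1 : 1 < q -> 0 < m ->
  q ^ d <= X - 1 -> X ^ (m - 1) * (X - 1) < q ^ y1 -> d * m < y1.
Proof.
move=> q_gt1 m_gt0 le_qX lt_y1; rewrite -(ltn_exp2l _ _ q_gt1) expnM.
apply: leq_ltn_trans lt_y1; rewrite -{1}(subnK m_gt0) expnD expn1 leq_mul //.
by rewrite leq_expn2r // (leq_trans le_qX) ?leq_subr.
Qed.

(* [(X^E - 1)^(m-E+1) <= X^(E (m-E+1))] and [X <= 2 (X - 1)]. *)
Lemma geom_expn_le X E m : 1 < X -> 0 < E <= m ->
  geom X E ^ m <= 2 ^ m * (X ^ (m - E) * (X ^ E - 1)) ^ (E - 1).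
Proof.
move=> X_gt1 /andP [E_gt0 le_Em].
set a := m - E; set b := E - 1; set Z := X ^ E - 1.
have m_split : m = b + (a + 1) by rewrite /a /b; lia.
have Za : Z ^ (a + 1) <= X ^ m * (X ^ a) ^ b.
  have : Z ^ (a + 1) <= (X ^ E) ^ (a + 1) by rewrite leq_exp2r ?leq_subr ?addn1.
  by rewrite -!expnM -expnD (_ : E * (a + 1) = m + a * b) //; rewrite /a /b; nia.
have Zm : Z ^ m <= X ^ m * (X ^ a * Z) ^ b.
  by rewrite {1}m_split expnD expnMn mulnA [X ^ m * _ * _]mulnC leq_mul2l Za orbT.
have Xm : X ^ m <= (2 * (X - 1)) ^ m by rewrite leq_exp2r; lia.
rewrite -(leq_pmul2r (_ : 0 < (X - 1) ^ m)) ?expn_gt0 ?subn_gt0 ?X_gt1 //.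
rewrite -expnMn mulnC -subnX1 -/Z (leq_trans Zm) // mulnAC -expnMn mulnC.
by rewrite mulnC leq_mul2r Xm orbT.
Qed.

Lemma lt_mul_of_geom q X E m d K y1 : 1 < q -> 1 < X -> 1 < K ->
  geom X E = K * q ^ d -> 1 < E <= m ->
  X ^ (m - E) * (X ^ E - 1) < q ^ y1 -> d * m < y1 * (E - 1).
Proof.
move=> q_gt1 X_gt1 K_gt1 geomK /andP [E_gt1 le_Em] lt_y1.
have le_geom : geom X E ^ m <= 2 ^ m * (X ^ (m - E) * (X ^ E - 1)) ^ (E - 1).
  by apply: geom_expn_le; rewrite // le_Em ltnW.
have ge_geom : 2 ^ m * q ^ (d * m) <= geom X E ^ m.
  rewrite expnM -expnMn leq_exp2r ?geomK ?leq_mul2r ?K_gt1 ?orbT //.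
  by apply: leq_trans le_Em; apply: ltnW.
rewrite -(ltn_exp2l _ _ q_gt1) -(ltn_pmul2l (_ : 0 < 2 ^ m)) ?expn_gt0 //.
apply: leq_ltn_trans ge_geom _; apply: leq_ltn_trans le_geom _.
by rewrite ltn_pmul2l ?expn_gt0 // expnM ltn_exp2r ?subn_gt0.
Qed.

Lemma expn_lt_of_geom q X E m d K y1 del : 1 < X -> 0 < K ->
  geom X E = K * q ^ d -> 0 < E -> 0 < m -> X ^ m <= 2 ^ del * q ^ y1 ->
  q ^ (d * m) < 2 ^ (m + del * (E - 1)) * q ^ (y1 * (E - 1)).
Proof.
move=> X_gt1 K_gt0 geomK E_gt0 m_gt0 le_Xm.
have ge_geom : q ^ (d * m) <= geom X E ^ m by rewrite expnM leq_exp2r // geomK leq_pmull.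
have lt_geom : geom X E ^ m < (2 * X ^ (E - 1)) ^ m.
  by rewrite ltn_exp2r // -{1}(subnK E_gt0) addn1 geomS_lt.
apply: leq_ltn_trans ge_geom (leq_trans lt_geom _).
rewrite expnMn -expnM [(E - 1) * m]mulnC expnM expnD -mulnA leq_mul2l; apply/orP; right.
by rewrite ![_ ^ (_ * (E - 1))]expnM -expnMn leq_expn2r.
Qed.

Lemma INR_expn a k : INR (a ^ k) = (INR a ^ k)%Re.
Proof. by elim: k => [|k IH]; rewrite ?expn0 // expnS mult_INR IH. Qed.

Lemma INR_gt0 k : 0 < k -> (0 < INR k)%Re.
Proof. by move=> k_gt0; apply: lt_0_INR; apply/ltP. Qed.

Lemma ln_lt_of_expn_lt p r a b M : 0 < p -> 0 < r -> p ^ a < r ^ M * p ^ b ->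
  (INR a * ln (INR p) < INR M * ln (INR r) + INR b * ln (INR p))%Re.
Proof.
move=> p_gt0 r_gt0 lt_p.
have pa_gt0 : 0 < p ^ a by rewrite expn_gt0 p_gt0.
have := ln_increasing _ _ (INR_gt0 pa_gt0) (lt_INR _ _ (ltP lt_p)).
have [p_pos r_pos] := (INR_gt0 p_gt0, INR_gt0 r_gt0).
rewrite mult_INR ln_mult ?INR_expn ?ln_pow //; apply: pow_lt => //.
Qed.

(* Taking logarithms, [y1 < 2 d] would give
   [d m log q < M log 2 + (2 d - 1) (E - 1) log q], i.e. the ratio is below [log 2 / log q]. *)
Lemma two_mul_le_of_ratio q d m E y1 M : 1 < q -> 0 < E -> 0 < M ->
  q ^ (d * m) < 2 ^ M * q ^ (y1 * (E - 1)) ->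
  ((INR d * (INR m - 2 * INR E + 2) + INR E - 1) / INR M >= ln 2 / ln (INR q))%Re ->
  2 * d <= y1.
Proof.
move=> q_gt1 E_gt0 M_gt0 lt_q ge_ratio; rewrite leqNgt; apply/negP => lt_y1.
have := ln_lt_of_expn_lt (ltnW q_gt1) (isT : 0 < 2) lt_q.
rewrite !mult_INR minus_INR; last by apply/leP.
rewrite INR_1 (_ : INR 2 = 2%Re); last by simpl; ring.
set L := ln (INR q) in ge_ratio *; move=> lt_ln.
have L_gt0 : (0 < L)%Re.
  by rewrite -ln_1; apply: ln_increasing; [lra | apply: lt_1_INR; apply/ltP].
have M_pos := INR_gt0 M_gt0.
have ge_prod : (ln 2 * INR M <= (INR d * (INR m - 2 * INR E + 2) + INR E - 1) * L)%Re.
  set P := (_ - 1)%Re in ge_ratio *.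
  have ML_pos : (0 < INR M * L)%Re by apply: Rmult_lt_0_compat.
  have := Rmult_le_compat_r _ _ _ (Rlt_le _ _ ML_pos) (Rge_le _ _ ge_ratio).
  rewrite (_ : (P / INR M * _ = P * L)%Re); last by field; lra.
  by rewrite (_ : (ln 2 / L * _ = ln 2 * INR M)%Re); last by field; lra.
have le_y1 : (INR y1 + 1 <= 2 * INR d)%Re.
  by rewrite -S_INR -(mult_INR 2); apply: le_INR; apply/leP.
have E_ge1 : (1 <= INR E)%Re by apply: (le_INR 1); apply/leP.
have : (0 <= (2 * INR d - 1 - INR y1) * ((INR E - 1) * L))%Re.
  by apply: Rmult_le_pos; [lra | apply: Rmult_le_pos; lra].
lra.
Qed.

Lemma INR_ge_div_mul a b c k : 0 < b -> c * a <= k * b ->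
  (INR k >= INR a / INR b * INR c)%Re.
Proof.
move=> b_gt0 /leP /le_INR; rewrite !mult_INR => le_ca; have b_pos := INR_gt0 b_gt0.
apply: Rle_ge; apply: (Rmult_le_reg_r (INR b)) => //.
by rewrite (_ : (INR a / INR b * INR c * INR b = INR c * INR a)%Re) //; field; lra.
Qed.

Section DifferenceEquation.

Variables m n q X y1 y2 : nat.
Hypotheses (lt_nm : n < m) (q_prime : prime q) (q_odd : odd q).
Hypotheses (X_gt1 : 1 < X) (coprime_Xq : coprime X q).
Hypotheses (y2_gt0 : 0 < y2) (lt_y21 : y2 < y1) (eq_diff : X ^ m - X ^ n = q ^ y1 - q ^ y2).

Lemma diff_factor : X ^ n * (X ^ (m - n) - 1) = q ^ y2 * (q ^ (y1 - y2) - 1).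
Proof. by rewrite !mulnBr !muln1 -!expnD !subnKC // ltnW. Qed.

Lemma logn_Xsub1 : logn q (X ^ (m - n) - 1) = y2.
Proof.
have q_gt0 := prime_gt0 q_prime.
have qy_gt1 : 0 < q ^ (y1 - y2) - 1.
  by rewrite subn_gt0 -(expn0 q) ltn_exp2l ?prime_gt1 // subn_gt0.
have := congr1 (logn q) diff_factor.
rewrite logn_Gauss; last by rewrite coprimeXr // coprime_sym.
rewrite lognM ?expn_gt0 ?q_gt0 // pfactorK //.
by rewrite (logn_coprime (m := q ^ _ - 1)) ?addn0 // coprime_subX1 ?subn_gt0.
Qed.

Lemma Xsub_lt_qy1 k : k <= m - n -> X ^ (m - k) * (X ^ k - 1) < q ^ y1.
Proof.
move=> le_k; have [le_km le_nmk] : k <= m /\ n <= m - k by move: le_k lt_nm; clear; lia.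
rewrite mulnBr muln1 -expnD subnK //.
have : X ^ n <= X ^ (m - k) by rewrite leq_pexp2l // ltnW.
have : 0 < q ^ y2 by rewrite expn_gt0 prime_gt0.
have : q ^ y2 < q ^ y1 by rewrite ltn_exp2l ?prime_gt1.
move: eq_diff; clear; lia.
Qed.

(* The exponent is the boolean [q ^ y1 < X ^ m], read as 0 or 1: the paper's delta. *)
Lemma Xm_le_2qy1 : X ^ m <= 2 ^ (q ^ y1 < X ^ m) * q ^ y1.
Proof.
case: ltnP => [_ | //]; last by rewrite mul1n.
change (X ^ m <= 2 * q ^ y1).
have Xmn_gt1 : 1 < X ^ (m - n) by rewrite -(exp1n (m - n)) ltn_exp2r // subn_gt0.
have : X ^ n * 2 <= X ^ m by rewrite -(subnKC (ltnW lt_nm)) expnD leq_mul2l Xmn_gt1 orbT.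
have : 0 < q ^ y2 by rewrite expn_gt0 prime_gt0.
move: eq_diff; clear; lia.
Qed.

Let E := e_ord q X.
Let N := (m - n) %/ E.
Let e := logn q N.
Hypothesis N_odd : odd N.

Lemma e_ord_dvd_diff : E %| m - n /\ q %| X ^ E - 1.
Proof.
apply: e_ord_dvd => //.
have : 0 < logn q (X ^ (m - n) - 1) by rewrite logn_Xsub1.
by rewrite logn_gt0 mem_primes => /and3P [].
Qed.

Lemma subnX1_I_poly : X ^ (m - n) - 1 = (X ^ E - 1) * I_poly E N X.
Proof. by rewrite I_poly_geom -subnX1 -expnM mulnC divnK //; case: e_ord_dvd_diff. Qed.

Lemma XE_gt1 : 1 < X ^ E.
Proof.
have [E_gt0 _ _] := e_ordP (prime_gt0 q_prime) coprime_Xq.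
by rewrite -(exp1n E) ltn_exp2r.
Qed.

Lemma logn_I_poly : logn q (I_poly E N X) = e.
Proof.
rewrite I_poly_geom logn_geom ?odd_gt0 ?XE_gt1 //.
by case: e_ord_dvd_diff.
Qed.

Lemma logn_XEsub1 : logn q (X ^ E - 1) = y2 - e.
Proof.
have := congr1 (logn q) subnX1_I_poly.
rewrite logn_Xsub1 lognM ?subn_gt0 ?XE_gt1 ?I_poly_geom ?geom_gt0 ?odd_gt0 //.
by rewrite -I_poly_geom logn_I_poly => ->; rewrite addnK.
Qed.

Lemma E_le_diff : E <= m - n.
Proof. by apply: dvdn_leq; [rewrite subn_gt0 | case: e_ord_dvd_diff]. Qed.

Lemma e_lt_y2 : e < y2.
Proof.
rewrite -subn_gt0 -logn_XEsub1 logn_gt0 mem_primes q_prime subn_gt0 XE_gt1.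
by case: e_ord_dvd_diff.
Qed.

Lemma logn_A_poly : logn q (A_poly E X) = y2 - e.
Proof.
have [E_gt0 _ minE] := e_ordP (prime_gt0 q_prime) coprime_Xq.
rewrite /A_poly -logn_XEsub1; case: eqP => [-> | /eqP E_neq1]; first by rewrite expn1.
have nqX : ~~ (q %| X - 1).
  have E_gt1 : 1 < E by rewrite ltn_neqAle eq_sym E_neq1 andTb.
  have /minE : 0 < 1 < E by rewrite E_gt1.
  rewrite /pm1_mod expn1 eqn_mod_dvd; last exact: ltnW.
  by rewrite negb_or => /andP [].
rewrite subnX1 lognM ?subn_gt0 ?geom_gt0 //.
by rewrite (logn_coprime (m := X - 1)) ?prime_coprime.
Qed.

Lemma A_poly_gt0 : 0 < A_poly E X.
Proof.
rewrite /A_poly; case: eqP => [_ | _]; first by rewrite subn_gt0.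
by have [E_gt0 _ _] := e_ordP (prime_gt0 q_prime) coprime_Xq; rewrite geom_gt0.
Qed.

Lemma B_I_poly_mul K : A_poly E X = K * q ^ (y2 - e) ->
  B_poly n E X * I_poly E N X * K = q ^ e * (q ^ (y1 - y2) - 1).
Proof.
move=> AK; apply/eqP; rewrite -(eqn_pmul2r (_ : 0 < q ^ (y2 - e))); last first.
  by rewrite expn_gt0 prime_gt0.
rewrite -mulnA -AK mulnAC B_A_poly -mulnA -subnX1_I_poly diff_factor.
by rewrite -{1}(subnKC (ltnW e_lt_y2)) expnD mulnAC.
Qed.

Lemma A_poly_factor : exists2 K, 0 < K /\ coprime K q & A_poly E X = K * q ^ (y2 - e).
Proof.
have [K coqK AK] := pfactor_coprime q_prime A_poly_gt0.
rewrite logn_A_poly in AK; exists K => //; split; last by rewrite coprime_sym.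
by move: A_poly_gt0; rewrite AK muln_gt0 => /andP [].
Qed.

Lemma bound_E_eq1 K : 0 < K -> A_poly E X = K * q ^ (y2 - e) -> E = 1 ->
  m * (y2 - e) < y1.
Proof.
move=> K_gt0 AK E1; rewrite mulnC.
have XK : X - 1 = K * q ^ (y2 - e) by rewrite -AK /A_poly E1.
have m_gt0 : 0 < m := leq_ltn_trans (leq0n n) lt_nm.
apply: (@lt_mul_of_sub1_ge q X) (prime_gt1 q_prime) m_gt0 _ _; first by rewrite XK leq_pmull.
by have := @Xsub_lt_qy1 1; rewrite expn1; apply; rewrite subn_gt0.
Qed.

Lemma bound_E_gt1 K : 0 < K -> A_poly E X = K * q ^ (y2 - e) -> 1 < E ->
  (1 < K -> (INR y1 >= INR m / INR (E - 1) * INR (y2 - e))%Re) /\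
  (let delta : R := if q ^ y1 < X ^ m then 1%Re else 0%Re in
   ((INR (y2 - e) * (INR m - 2 * INR E + 2) + INR E - 1)
      / (INR m + delta * (INR E - 1)) >= ln 2 / ln (INR q))%Re ->
   2 * (y2 - e) <= y1).
Proof.
move=> K_gt0 AK E_gt1.
have geomK : geom X E = K * q ^ (y2 - e) by rewrite -A_poly_geom // neq_ltn E_gt1 orbT.
have le_Em : E <= m := leq_trans E_le_diff (leq_subr n m).
have m_gt0 : 0 < m := leq_trans (ltnW E_gt1) le_Em.
split=> [K_gt1 | delta ge_ratio].
  apply: INR_ge_div_mul; first by rewrite subn_gt0.
  apply: ltnW; apply: lt_mul_of_geom (prime_gt1 q_prime) X_gt1 K_gt1 geomK _ _.
    by rewrite E_gt1.
  exact: Xsub_lt_qy1 E_le_diff.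
have lt_q := expn_lt_of_geom X_gt1 K_gt0 geomK (ltnW E_gt1) m_gt0 Xm_le_2qy1.
apply: two_mul_le_of_ratio (prime_gt1 q_prime) (ltnW E_gt1) _ lt_q _.
  by rewrite addn_gt0 m_gt0.
rewrite plus_INR mult_INR (minus_INR _ _ (elimT leP (ltnW E_gt1))) INR_1.
by move: ge_ratio; rewrite /delta; case: (q ^ y1 < X ^ m).
Qed.

End DifferenceEquation.

Theorem mainTheorem7 (m n q X y1 y2 : nat) :
  0 < n -> n < m -> 3 <= m -> prime q -> odd q ->
  1 < X -> coprime X q -> y2 > 0 -> y2 < y1 ->
  X ^ m - X ^ n = q ^ y1 - q ^ y2 ->
  let E := e_ord q X in
  let N := (m - n) %/ E in
  let e := logn q N in
  odd N ->
  [/\ E %| (m - n),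
      e < y2,
      q ^ e %| I_poly E N X
    & exists K : nat,
      [/\ 0 < K /\ coprime K q,
          A_poly E X = K * q ^ (y2 - e),
          B_poly n E X * I_poly E N X * K = q ^ e * (q ^ (y1 - y2) - 1),
          (E = 1 ->
             2 * (y2 - e) < y1 /\ (1 < K -> m * (y2 - e) < y1))
        & (1 < E ->
             (1 < K ->
               (INR y1 >= INR m / INR (E - 1) * INR (y2 - e))%Re) /\
             (let delta : R := if q ^ y1 < X ^ m then 1%Re else 0%Re in
              ((INR (y2 - e) * (INR m - 2 * INR E + 2) + INR E - 1)
                 / (INR m + delta * (INR E - 1))
                 >= ln 2 / ln (INR q))%Re ->
              2 * (y2 - e) <= y1))]].
Proof.
move=> _ lt_nm m_ge3 q_prime q_odd X_gt1 coXq y2_gt0 lt_y21 eq_diff E N e N_odd.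
rewrite {}/e {}/N {}/E in N_odd *.
have [K [K_gt0 coKq] AK] :=
  A_poly_factor lt_nm q_prime q_odd X_gt1 coXq y2_gt0 lt_y21 eq_diff N_odd.
split.
- by case: (e_ord_dvd_diff lt_nm q_prime coXq y2_gt0 lt_y21 eq_diff N_odd).
- exact: (e_lt_y2 lt_nm q_prime q_odd X_gt1 coXq y2_gt0 lt_y21 eq_diff N_odd).
- rewrite -(logn_I_poly lt_nm q_prime q_odd X_gt1 coXq y2_gt0 lt_y21 eq_diff N_odd).
  exact: pfactor_dvdnn.
exists K; split => //.
- exact: (B_I_poly_mul lt_nm q_prime q_odd X_gt1 coXq y2_gt0 lt_y21 eq_diff N_odd AK).
- move=> E1; have lt_y1 := bound_E_eq1 lt_nm q_prime X_gt1 lt_y21 eq_diff K_gt0 AK E1.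
  by split=> [|//]; apply: leq_ltn_trans lt_y1; rewrite leq_mul2r (ltnW m_ge3) orbT.
- exact: (bound_E_gt1 lt_nm q_prime X_gt1 coXq y2_gt0 lt_y21 eq_diff N_odd K_gt0 AK).
Qed.
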